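(* Let $N$ be a positive integer. Then there exist equal norm tight integer frames with: (1) $4N^2$ vectors in $\mathcal{H}_{N^2+1}$; (2) $4N^2$ vectors in $\mathcal{H}_{2N^2+1}$; (3) $4N^2$ vectors in $\mathcal{H}_{3N^2+1}$; (4) $8N^2$ vectors in $\mathcal{H}_{4N^2+1}$; (5) $8N^2$ vectors in $\mathcal{H}_{4N^2+2}$.
   Context: $\mathcal{H}_M$ is the real $M$-dimensional Hilbert space, identified with $\mathbb{R}^M$ via a fixed orthonormal basis. An equal norm tight integer frame (ENTIF) with $N$ elements in $\mathcal{H}_M$ is an $M\times N$ integer matrix $A$ of rank $M$ with $AA^T=\lambda I_M$ for some $\lambda>0$ and all columns of the same Euclidean norm. *)

From mathcomp Require Import all_boot all_order all_algebra.
Set Implicit Arguments. Unset Strict Implicit. Unset Printing Implicit Defensive.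
Import Order.TTheory GRing.Theory Num.Theory.
Local Open Scope ring_scope.

(* An equal norm tight integer frame (ENTIF) with N elements in H_M:
   an M x N integer matrix A of rank M (rank computed over the rationals,
   equivalently over the reals), with A A^T = lambda I_M for some lambda > 0
   (lambda real; necessarily an integer since A is integral), and all columns
   of the same Euclidean norm (equivalently the same squared norm). *)
Definition col_sqnorm (M N : nat) (A : 'M[int]_(M, N)) (j : 'I_N) : int :=
  \sum_(i < M) A i j ^+ 2.

Definition is_ENTIF (M N : nat) (A : 'M[int]_(M, N)) : Prop :=
  [/\ \rank (map_mx (fun z : int => z%:~R : rat) A) = M,
      exists2 lambda : int, 0 < lambda & A *m A^T = lambda%:M
    & forall j k : 'I_N, col_sqnorm A j = col_sqnorm A k].

Definition exists_ENTIF (M N : nat) : Prop :=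
  exists A : 'M[int]_(M, N), is_ENTIF A.

(* Take a Hadamard matrix of order n (Sylvester's, n = 4 or 8) and split off
   g + t of its rows into U (g rows) and V (t rows). Stack N^2 disjoint copies
   of N V block-diagonally on top of one long row made of N^2 copies of U.
   Rows in different diagonal blocks have disjoint supports, rows of V and U are
   orthogonal, and each block row has squared norm N^2 n, as does each bottom
   row (N^2 copies of a norm-n row), so the matrix is tight with constant
   N^2 n. Every column meets one copy of N V and one copy of U, whose entries
   are all +-1, hence has squared norm t N^2 + g. The choices
   (t, g, n) = (1,1,4), (2,1,4), (3,1,4), (4,1,8), (4,2,8) give the five frames. *)

From mathcomp Require Import all_boot all_order all_algebra.
From mathcomp Require Import mxtens.
Set Implicit Arguments. Unset Strict Implicit. Unset Printing Implicit Defensive.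
Import Order.TTheory GRing.Theory Num.Theory.
Local Open Scope ring_scope.

Definition partial_hadamard m n (A : 'M[int]_(m, n)) : Prop :=
  (forall i j, A i j ^+ 2 = 1) /\ A *m A^T = n%:R%:M.

Lemma tens_scalar_scalar (R : comPzRingType) m n (a b : R) :
  (a%:M : 'M_m) *t (b%:M : 'M_n) = (a * b)%:M.
Proof.
apply/matrixP=> i j.
case: (mxtens_indexP i) => i1 i2; case: (mxtens_indexP j) => j1 j2.
rewrite tensmxE !mxE (inj_eq (can_inj (@mxtens_indexK _ _))) xpair_eqE.
by case: (i1 == j1); case: (i2 == j2); rewrite ?mulr1n ?mulr0n ?mulr0 ?mul0r.
Qed.

Lemma partial_hadamard_tens m n p q (A : 'M[int]_(m, n)) (B : 'M[int]_(p, q)) :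
  partial_hadamard A -> partial_hadamard B -> partial_hadamard (A *t B).
Proof.
move=> [sA oA] [sB oB]; split.
  by move=> i j; rewrite mxE exprMn sA sB mulr1.
by rewrite trmx_tens tensmx_mul oA oB tens_scalar_scalar natrM.
Qed.

Lemma partial_hadamard_rowsub m m' n (f : 'I_m' -> 'I_m) (A : 'M[int]_(m, n)) :
  injective f -> partial_hadamard A -> partial_hadamard (rowsub f A).
Proof.
move=> inj_f [sA oA]; split=> [i j|]; first by rewrite mxE sA.
apply/matrixP=> i j; have /matrixP/(_ (f i) (f j)) := oA.
by rewrite !mxE (inj_eq inj_f) => <-; apply: eq_bigr => k _; rewrite !mxE.
Qed.

Definition sylvester2 : 'M[int]_2 := \matrix_(i, j) (-1) ^+ (i * j).

Lemma partial_hadamard_sylvester2 : partial_hadamard sylvester2.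
Proof.
split=> [i j|]; first by rewrite mxE -exprM mulnC exprM sqrrN expr1n.
by apply/matrixP=> -[[|[|//]] ?] [[|[|//]] ?];
  rewrite !mxE !big_ord_recl big_ord0 !mxE.
Qed.

Lemma col_sqnorm_col_mx m1 m2 n (A : 'M[int]_(m1, n)) (B : 'M[int]_(m2, n)) j :
  col_sqnorm (col_mx A B) j = col_sqnorm A j + col_sqnorm B j.
Proof.
rewrite /col_sqnorm big_split_ord.
by congr (_ + _); apply: eq_bigr => i _; rewrite ?col_mxEu ?col_mxEd.
Qed.

Lemma col_sqnormZ m n (a : int) (A : 'M[int]_(m, n)) j :
  col_sqnorm (a *: A) j = a ^+ 2 * col_sqnorm A j.
Proof. by rewrite /col_sqnorm mulr_sumr; apply: eq_bigr => i _; rewrite mxE exprMn. Qed.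

Lemma col_sqnorm_tens m n p q (A : 'M[int]_(m, n)) (B : 'M[int]_(p, q)) k l :
  col_sqnorm (A *t B) (mxtens_index (k, l)) = col_sqnorm A k * col_sqnorm B l.
Proof.
rewrite /col_sqnorm mulr_sum; apply: eq_bigr => i _.
by rewrite mxE mxtens_indexK exprMn.
Qed.

Lemma col_sqnorm1 n (j : 'I_n) : col_sqnorm (1%:M : 'M[int]_n) j = 1.
Proof.
rewrite /col_sqnorm (bigD1 j) //= big1 => [|i /negbTE nij]; last by rewrite mxE nij.
by rewrite mxE eqxx addr0.
Qed.

Lemma col_sqnorm_sign m n (A : 'M[int]_(m, n)) j :
  (forall i j, A i j ^+ 2 = 1) -> col_sqnorm A j = m%:R.
Proof.
by move=> sA; rewrite /col_sqnorm (eq_bigr _ (fun i _ => sA i j)) sumr_const card_ord.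
Qed.

Lemma tight_mxrank m n (A : 'M[int]_(m, n)) (lambda : int) :
  lambda != 0 -> A *m A^T = lambda%:M ->
  \rank (map_mx (fun z : int => z%:~R : rat) A) = m.
Proof.
move=> lambda_neq0 AAt; apply/eqP; rewrite eqn_leq rank_leq_row /=.
set B := map_mx _ A.
have AAt_rat : B *m B^T = (lambda%:~R)%:M.
  by rewrite /B map_trmx -map_mxM AAt map_scalar_mx.
apply: (mulmx1_min_rank (M := 1%:M) (N := B^T *m (lambda%:~R^-1)%:M)).
by rewrite mul1mx mulmxA AAt_rat -scalar_mxM mulfV // intr_eq0.
Qed.

Lemma is_ENTIF_tight m n (A : 'M[int]_(m, n)) (lambda c : int) :
  0 < lambda -> A *m A^T = lambda%:M -> (forall j, col_sqnorm A j = c) ->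
  is_ENTIF A.
Proof.
move=> lambda_gt0 AAt normA; split=> [||j k]; last by rewrite !normA.
  by apply: tight_mxrank AAt; rewrite gt_eqF.
by exists lambda.
Qed.

Section HadamardFrame.
Variables (N n g t : nat) (U : 'M[int]_(g, n)) (V : 'M[int]_(t, n)).
Hypothesis hadUV : partial_hadamard (col_mx U V).

Definition hadamard_frame : 'M[int]_(N ^ 2 * t + 1 * g, N ^ 2 * n) :=
  col_mx (N%:R *: ((1%:M : 'M_(N ^ 2)) *t V)) ((const_mx 1 : 'rV_(N ^ 2)) *t U).

Lemma hadamard_frame_tight :
  hadamard_frame *m hadamard_frame^T = (N ^ 2 * n)%:R%:M.
Proof.
have [UUt UVt VUt VVt] : [/\ U *m U^T = n%:R%:M, U *m V^T = 0,
                            V *m U^T = 0 & V *m V^T = n%:R%:M].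
  case: hadUV => _.
  by rewrite tr_col_mx mul_col_row (scalar_mx_block g t) => /eq_block_mx.
have ones_sqnorm : (const_mx 1 : 'rV[int]_(N ^ 2)) *m (const_mx 1)^T = (N ^ 2)%:R%:M.
  apply/matrixP=> i j; rewrite !ord1 !mxE (eq_bigr (fun=> 1)) => [|k _].
    by rewrite sumr_const card_ord.
  by rewrite !mxE mulr1.
rewrite tr_col_mx mul_col_row linearZ /= !trmx_tens -!scalemxAl -!scalemxAr !tensmx_mul.
rewrite UVt VUt UUt VVt !tensmx0 !scaler0 ones_sqnorm trmx1 mulmx1 !tens_scalar_scalar.
by rewrite !scale_scalar_mx mul1r mulrA -!natrM mulnn -scalar_mx_block.
Qed.

Lemma hadamard_frame_col_sqnorm j :
  col_sqnorm hadamard_frame j = (N ^ 2 * t + g)%:R.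
Proof.
case: hadUV => sUV _; case: (mxtens_indexP j) => b c.
rewrite col_sqnorm_col_mx col_sqnormZ !col_sqnorm_tens col_sqnorm1 !col_sqnorm_sign.
- by rewrite !mul1r natrD natrM natrX.
- by move=> i k; rewrite -(col_mxEu U V) sUV.
- by move=> i k; rewrite mxE expr1n.
- by move=> i k; rewrite -(col_mxEd U V) sUV.
Qed.

End HadamardFrame.

Lemma exists_ENTIF_partial_hadamard N n g t (W : 'M[int]_(g + t, n)) :
  (0 < N)%N -> (0 < n)%N -> partial_hadamard W ->
  exists_ENTIF (t * N ^ 2 + g) (n * N ^ 2).
Proof.
move=> N_gt0 n_gt0 hadW; rewrite -[g]mul1n (mulnC t) (mulnC n).
have hadUV : partial_hadamard (col_mx (usubmx W) (dsubmx W)) by rewrite vsubmxK.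
exists (hadamard_frame N (usubmx W) (dsubmx W)).
apply: (is_ENTIF_tight _ (hadamard_frame_tight N hadUV)
          (hadamard_frame_col_sqnorm (N := N) hadUV)).
by rewrite ltr0n muln_gt0 expn_gt0 N_gt0 n_gt0.
Qed.

Lemma exists_ENTIF_hadamard N n g t (H : 'M[int]_n) :
  (0 < N)%N -> partial_hadamard H -> (0 < t + g <= n)%N ->
  exists_ENTIF (t * N ^ 2 + g) (n * N ^ 2).
Proof.
move=> N_gt0 hadH /andP[tg_gt0 tg_le_n].
have gt_le_n : (g + t <= n)%N by rewrite addnC.
apply: (exists_ENTIF_partial_hadamard N_gt0 (leq_trans tg_gt0 tg_le_n)).
apply: (partial_hadamard_rowsub (f := widen_ord gt_le_n) _ hadH).
by move=> i j /(congr1 val) /= /val_inj.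
Qed.

Definition sylvester4 : 'M[int]_4 := sylvester2 *t sylvester2.
Definition sylvester8 : 'M[int]_8 := sylvester2 *t sylvester4.

Lemma partial_hadamard_sylvester4 : partial_hadamard sylvester4.
Proof. exact: partial_hadamard_tens partial_hadamard_sylvester2 partial_hadamard_sylvester2. Qed.

Lemma partial_hadamard_sylvester8 : partial_hadamard sylvester8.
Proof. exact: partial_hadamard_tens partial_hadamard_sylvester2 partial_hadamard_sylvester4. Qed.

Local Close Scope ring_scope.

Theorem theorem6p10 (N : nat) : (0 < N)%N ->
  [/\ exists_ENTIF (N ^ 2).+1 (4 * N ^ 2),
      exists_ENTIF (2 * N ^ 2).+1 (4 * N ^ 2),
      exists_ENTIF (3 * N ^ 2).+1 (4 * N ^ 2),
      exists_ENTIF (4 * N ^ 2).+1 (8 * N ^ 2)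
    & exists_ENTIF (4 * N ^ 2).+2 (8 * N ^ 2)].
Proof.
move=> N_gt0.
have E4 t g := exists_ENTIF_hadamard (t := t) (g := g) N_gt0 partial_hadamard_sylvester4.
have E8 t g := exists_ENTIF_hadamard (t := t) (g := g) N_gt0 partial_hadamard_sylvester8.
split.
- by have := E4 1 1 isT; rewrite mul1n addn1.
- by rewrite -addn1; apply: E4.
- by rewrite -addn1; apply: E4.
- by rewrite -addn1; apply: E8.
- by rewrite -addn2; apply: E8.
Qed.
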